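(* Let $A,B$ be idempotent $\Gamma$-graded rings and ${}_AP_B$, ${}_BQ_A$ graded bimodules unital on both sides, such that there is a graded Morita context $(A,B,P,Q,\mu,\nu)$ with surjective trace maps. For every unital graded left $A$-module $U$, the map $\eta:B\cdot\mathrm{HOM}_A(P,A)\otimes_AU\to B\cdot\mathrm{HOM}_A(P,U)$ given by $\eta(g\otimes u)(p)=g(p)u$ is a graded epimorphism of degree $e$ of graded left $B$-modules whose kernel is torsion (i.e. annihilated elementwise by $B$).
   Context: $\Gamma$ is a fixed multiplicative group with identity $e$. Rings are associative $\Gamma$-graded, not necessarily unital; $A$ is idempotent if $A^2=A$; a module is unital if $AM=M$. A left-linear $f$ is graded of degree $\sigma$ if $f(M_\tau)\subseteq N_{\tau\sigma}$; $\mathrm{HOM}$ is the direct sum over degrees. $\mathrm{HOM}_A(P,N)$ is a graded left $B$-module via $(bf)(p)=f(pb)$, and $\mathrm{HOM}_A(P,A)$ is also a right $A$-module via $(fa)(p)=f(p)a$; $B\cdot H$ denotes finite sums $\sum b_ih_i$. A graded Morita context $(A,B,P,Q,\mu,\nu)$: idempotent graded rings $A,B$, graded bimodules ${}_AP_B$, ${}_BQ_A$ unital on both sides, degree-$e$ graded bimodule maps $\mu:P\otimes_BQ\to A$, $\langle p,q\rangle=\mu(p\otimes q)$, $\nu:Q\otimes_AP\to B$, $[q,p]=\nu(q\otimes p)$, with $p'[q,p]=\langle p',q\rangle p$ and $q'\langle p,q\rangle=[q',p]q$. *)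

From HB Require Import structures.
From mathcomp Require Import all_boot all_algebra.
From Stdlib Require List.

Set Implicit Arguments.
Unset Strict Implicit.
Unset Printing Implicit Defensive.
Import GRing.Theory.
Local Open Scope ring_scope.

Record ggroup := GGroup {
  gcar :> Type;
  gmul : gcar -> gcar -> gcar;
  gid : gcar;
  ginv : gcar -> gcar;
  gmulA : forall x y z, gmul x (gmul y z) = gmul (gmul x y) z;
  gmul1 : forall x, gmul gid x = x;
  gmulV : forall x, gmul (ginv x) x = gid
}.

Section Grading.
Variable G : ggroup.

(** [deg s m] : m is homogeneous of degree s, i.e. m lies in M_s.
    [is_grading deg] : M is the direct sum of the subgroups M_s. *)
Definition is_grading (M : zmodType) (deg : G -> M -> Prop) : Prop :=
  [/\ (forall s, deg s 0),
      (forall s x y, deg s x -> deg s y -> deg s (x - y)),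
      (forall m : M, exists l : seq (G * M)%type,
          (forall c, List.In c l -> deg c.1 c.2) /\ m = \sum_(c <- l) c.2)
    & (forall l : seq (G * M)%type, List.NoDup (map fst l) ->
          (forall c, List.In c l -> deg c.1 c.2) ->
          \sum_(c <- l) c.2 = 0 -> forall c, List.In c l -> c.2 = 0)].
End Grading.

Record gring (G : ggroup) := GRingPack {
  rcar :> zmodType;
  rmul : rcar -> rcar -> rcar;
  rmulA : forall x y z, rmul x (rmul y z) = rmul (rmul x y) z;
  rmulDl : forall x y z, rmul (x + y) z = rmul x z + rmul y z;
  rmulDr : forall x y z, rmul x (y + z) = rmul x y + rmul x z;
  rdeg : G -> rcar -> Prop;
  rdeg_grading : is_grading rdeg;
  rdeg_mul : forall s t x y, rdeg s x -> rdeg t y -> rdeg (gmul s t) (rmul x y)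
}.

Record glmod (G : ggroup) (A : gring G) := GLModPack {
  lcar :> zmodType;
  lact : A -> lcar -> lcar;
  lactDl : forall a b m, lact (a + b) m = lact a m + lact b m;
  lactDr : forall a m n, lact a (m + n) = lact a m + lact a n;
  lactA : forall a b m, lact (rmul a b) m = lact a (lact b m);
  ldeg : G -> lcar -> Prop;
  ldeg_grading : is_grading ldeg;
  ldeg_act : forall s t a m, rdeg s a -> ldeg t m -> ldeg (gmul s t) (lact a m)
}.

Record gbimod (G : ggroup) (A B : gring G) := GBimodPack {
  bcar :> zmodType;
  bl : A -> bcar -> bcar;
  br : bcar -> B -> bcar;
  blDl : forall a a' m, bl (a + a') m = bl a m + bl a' m;
  blDr : forall a m n, bl a (m + n) = bl a m + bl a n;
  blA : forall a a' m, bl (rmul a a') m = bl a (bl a' m);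
  brDl : forall m n b, br (m + n) b = br m b + br n b;
  brDr : forall m b b', br m (b + b') = br m b + br m b';
  brA : forall m b b', br m (rmul b b') = br (br m b) b';
  blr : forall a m b, br (bl a m) b = bl a (br m b);
  bdeg : G -> bcar -> Prop;
  bdeg_grading : is_grading bdeg;
  bdeg_l : forall s t a m, rdeg s a -> bdeg t m -> bdeg (gmul s t) (bl a m);
  bdeg_r : forall s t m b, bdeg t m -> rdeg s b -> bdeg (gmul t s) (br m b)
}.

Section Defs.
Variable G : ggroup.

Definition idempotent_ring (A : gring G) : Prop :=
  forall a : A, exists l : seq (A * A)%type, a = \sum_(c <- l) rmul c.1 c.2.

Definition lunital (A : gring G) (M : zmodType) (act : A -> M -> M) : Prop :=
  forall m : M, exists l : seq (A * M)%type, m = \sum_(c <- l) act c.1 c.2.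
Definition runital (B : gring G) (M : zmodType) (act : M -> B -> M) : Prop :=
  forall m : M, exists l : seq (M * B)%type, m = \sum_(c <- l) act c.1 c.2.

Definition bimod_unital (A B : gring G) (P : gbimod A B) : Prop :=
  lunital (@bl _ _ _ P) /\ runital (@br _ _ _ P).

(** The degree-e bimodule maps
    mu : P (x)_B Q -> A and nu : Q (x)_A P -> B are given, via the universal
    property of the tensor product, as balanced biadditive maps
    <p,q> = mu p q and [q,p] = nu q p. *)
Definition morita_context (A B : gring G) (P : gbimod A B) (Q : gbimod B A)
    (mu : P -> Q -> A) (nu : Q -> P -> B) : Prop :=
  [/\ idempotent_ring A, idempotent_ring B, bimod_unital P & bimod_unital Q] /\
  [/\ (forall p p' q, mu (p + p') q = mu p q + mu p' q),
      (forall p q q', mu p (q + q') = mu p q + mu p q'),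
      (forall p b q, mu (br p b) q = mu p (bl b q)),
      (forall a p q, mu (bl a p) q = rmul a (mu p q)) &
      (forall p q a, mu p (br q a) = rmul (mu p q) a)] /\
  (forall s t p q, bdeg s p -> bdeg t q -> rdeg (gmul s t) (mu p q)) /\
  [/\ (forall q q' p, nu (q + q') p = nu q p + nu q' p),
      (forall q p p', nu q (p + p') = nu q p + nu q p'),
      (forall q a p, nu (br q a) p = nu q (bl a p)),
      (forall b q p, nu (bl b q) p = rmul b (nu q p)) &
      (forall q p b, nu q (br p b) = rmul (nu q p) b)] /\
  (forall s t q p, bdeg s q -> bdeg t p -> rdeg (gmul s t) (nu q p)) /\
  (forall p' q p, br p' (nu q p) = bl (mu p' q) p) /\
  (forall q' p q, br q' (mu p q) = bl (nu q' p) q).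

(** surjectivity of a trace map (its image is the set of finite sums) *)
Definition trace_surj (A : gring G) (M N : Type) (mu : M -> N -> A) : Prop :=
  forall a : A, exists l : seq (M * N)%type, a = \sum_(c <- l) mu c.1 c.2.

Section Hom.
Variables (A : gring G) (M N : zmodType).
Variables (am : A -> M -> M) (an : A -> N -> N).
Variables (dM : G -> M -> Prop) (dN : G -> N -> Prop).

Definition Alinear (f : M -> N) : Prop :=
  (forall m m', f (m + m') = f m + f m') /\ (forall a m, f (am a m) = an a (f m)).

Definition graded_of (s : G) (f : M -> N) : Prop :=
  forall t m, dM t m -> dN (gmul t s) (f m).

Definition in_HOM (f : M -> N) : Prop :=
  exists l : seq (G * (M -> N))%type,
    (forall c, List.In c l -> Alinear c.2 /\ graded_of c.1 c.2) /\
    (forall m, f m = \sum_(c <- l) c.2 m).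

(** f \in B . HOM_A(M,N), for M a right B-module, with (b f)(m) = f(m b) *)
Definition in_BHOM (B : gring G) (mb : M -> B -> M) (f : M -> N) : Prop :=
  exists l : seq (B * (M -> N))%type,
    (forall c, List.In c l -> in_HOM c.2) /\
    (forall m, f m = \sum_(c <- l) c.2 (mb m c.1)).
End Hom.

Section Eta.
Variables (A B : gring G) (P : gbimod A B) (U : glmod A).

(** the right A-module X := B . HOM_A(P,A) (as a predicate on P -> A) *)
Definition inX (x : P -> A) : Prop :=
  in_BHOM (@bl _ _ _ P) (@rmul _ A) (@bdeg _ _ _ P) (@rdeg _ A) (@br _ _ _ P) x.

Definition Xbalanced (W : zmodType) (phi : (P -> A) -> U -> W) : Prop :=
  [/\ (forall x x' u, inX x -> inX x' ->
         phi (fun p => x p + x' p) u = phi x u + phi x' u),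
      (forall x u u', inX x -> phi x (u + u') = phi x u + phi x u')
    & (forall x a u, inX x ->
         phi (fun p => rmul (x p) a) u = phi x (lact a u))].

(** Elements of X (x)_A U are represented by finite lists of pure tensors
    [:: (x_1,u_1); ...] standing for sum_i x_i (x) u_i, with all x_i in X.
    Such an element is zero in the tensor product iff it is killed by
    every A-balanced biadditive map (universal property). *)
Definition in_T (s : seq ((P -> A) * U)%type) : Prop := forall c, List.In c s -> inX c.1.

Definition tensor_zero (s : seq ((P -> A) * U)%type) : Prop :=
  forall (W : zmodType) (phi : (P -> A) -> U -> W),
    Xbalanced phi -> \sum_(c <- s) phi c.1 c.2 = 0.

Definition Tact (b : B) (s : seq ((P -> A) * U)%type) : seq ((P -> A) * U)%type :=
  map (fun c => (fun p => c.1 (br p b), c.2)) s.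

Definition T_homog (s : G) (l : seq ((P -> A) * U)%type) : Prop :=
  forall c, List.In c l -> exists r t,
    graded_of (@bdeg _ _ _ P) (@rdeg _ A) r c.1 /\ ldeg t c.2 /\ gmul r t = s.

Definition eta (s : seq ((P -> A) * U)%type) : P -> U :=
  fun p => \sum_(c <- s) lact (c.1 p) c.2.

Definition inBHOM_PU (h : P -> U) : Prop :=
  in_BHOM (@bl _ _ _ P) (@lact _ _ U) (@bdeg _ _ _ P) (@ldeg _ _ U) (@br _ _ _ P) h.
End Eta.

End Defs.

Arguments inX {G A B} P x.
Arguments in_T {G A B} P {U} s.
Arguments tensor_zero {G A B} P U s.
Arguments Tact {G A B} P {U} b s.
Arguments T_homog {G A B} P U s l.
Arguments eta {G A B} P U s p.
Arguments inBHOM_PU {G A B} P U h.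

From mathcomp Require Import all_boot all_algebra.
From Stdlib Require List.
From Stdlib Require Import FunctionalExtensionality.
Set Implicit Arguments.
Unset Strict Implicit.
Unset Printing Implicit Defensive.
Import GRing.Theory.
Local Open Scope ring_scope.

(* Write b = sum_i [q_i, p_i], using that nu is onto.  For every A-linear f on P the
   Morita identity p [q, p'] = <p, q> p' gives f (p b) = sum_i <p, q_i> f (p_i).
   For f in HOM_A(P, U) this exhibits p |-> f (p b) as eta (sum_i <-, q_i> (x) f (p_i)),
   whence surjectivity.  For z = sum_j x_j (x) u_j it gives
   b z = sum_i <-, q_i> (x) sum_j x_j (p_i) u_j = sum_i <-, q_i> (x) eta z (p_i),
   which vanishes when eta z = 0. *)

Lemma additive_sum (V W : zmodType) (f : V -> W) (I : Type) (r : seq I) (F : I -> V) :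
  {morph f : x y / x + y} -> f (\sum_(i <- r) F i) = \sum_(i <- r) f (F i).
Proof.
move=> fD; have f0 : f 0 = 0 by apply: (addrI (f 0)); rewrite -fD !addr0.
exact: (big_morph f fD f0).
Qed.

Lemma eq_bigr_In (V : zmodType) (I : Type) (r : seq I) (F F' : I -> V) :
  (forall i, List.In i r -> F i = F' i) -> \sum_(i <- r) F i = \sum_(i <- r) F' i.
Proof.
elim: r => [|i r IHr] eqF; first by rewrite !big_nil.
by rewrite !big_cons eqF ?IHr //= => [j rj|]; [apply: eqF; right | left].
Qed.

Lemma grading_sum (G : ggroup) (M : zmodType) (d : G -> M -> Prop) s
    (I : Type) (r : seq I) (F : I -> M) :
  is_grading d -> (forall i, List.In i r -> d s (F i)) -> d s (\sum_(i <- r) F i).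
Proof.
move=> [d0 dB _ _]; elim: r => [|i r IHr] dF; first by rewrite big_nil.
have -> : \sum_(j <- i :: r) F j = F i - (0 - \sum_(j <- r) F j).
  by rewrite big_cons sub0r opprK.
apply: (dB); first by apply: dF; left.
by apply: (dB) => //; apply: IHr => j rj; apply: dF; right.
Qed.

(* [in_HOM] and [in_BHOM] both unfold to instances of [fun_span]. *)
Section FunSpan.
Variables (M N : zmodType) (J : Type) (ok : J -> Prop) (ev : J -> M -> N).

Definition fun_span (f : M -> N) : Prop :=
  exists l : seq J, (forall c, List.In c l -> ok c) /\ (forall m, f m = \sum_(c <- l) ev c m).

Lemma fun_span_gen c : ok c -> fun_span (ev c).
Proof. by move=> okc; exists [:: c]; split=> [d [<-|[]] | m]; rewrite ?big_seq1. Qed.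

Lemma fun_span_sum (I : Type) (r : seq I) (F : I -> M -> N) f :
  (forall m, f m = \sum_(i <- r) F i m) -> (forall i, List.In i r -> fun_span (F i)) ->
  fun_span f.
Proof.
elim: r f => [|i r IHr] f fE spanF.
  by exists [::]; split=> // m; rewrite fE !big_nil.
have [l1 [ok1 E1]] := spanF i (or_introl erefl).
have [l2 [ok2 E2]] := IHr _ (fun m => erefl) (fun j rj => spanF j (or_intror rj)).
exists (l1 ++ l2); split=> [c /(List.in_app_or l1 l2 c) [] | m]; [exact: ok1 | exact: ok2 |].
by rewrite fE big_cons big_cat E1 E2.
Qed.

Lemma fun_span_Alinear (G : ggroup) (A : gring G) (am : A -> M -> M) (an : A -> N -> N) f :
  (forall a, {morph an a : x y / x + y}) -> (forall c, ok c -> Alinear am an (ev c)) ->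
  fun_span f -> Alinear am an f.
Proof.
move=> anD evA [l [okl fE]]; split=> [m m' | a m]; rewrite !fE.
  by rewrite -big_split; apply: eq_bigr_In => c /okl /evA [evD _].
by rewrite (additive_sum _ _ (anD a)); apply: eq_bigr_In => c /okl /evA [_ evL].
Qed.
End FunSpan.

Section Hom.
Variables (G : ggroup) (A : gring G) (M N : zmodType) (am : A -> M -> M) (an : A -> N -> N).
Variables (dM : G -> M -> Prop) (dN : G -> N -> Prop).

Local Notation graded_hom :=
  (fun c : G * (M -> N) => Alinear am an c.2 /\ graded_of dM dN c.1 c.2).

Lemma in_HOM_graded s f : Alinear am an f -> graded_of dM dN s f -> in_HOM am an dM dN f.
Proof. by move=> fA fs; exact: (@fun_span_gen _ _ _ graded_hom (fun c m => c.2 m) (s, f)). Qed.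

Lemma in_HOM_sum (I : Type) (r : seq I) (F : I -> M -> N) f :
  (forall m, f m = \sum_(i <- r) F i m) -> (forall i, List.In i r -> in_HOM am an dM dN (F i)) ->
  in_HOM am an dM dN f.
Proof. exact: (@fun_span_sum _ _ _ graded_hom (fun c m => c.2 m)). Qed.

Hypothesis anD : forall a, {morph an a : x y / x + y}.

Lemma in_HOM_Alinear f : in_HOM am an dM dN f -> Alinear am an f.
Proof. by apply: (@fun_span_Alinear _ _ _ graded_hom (fun c m => c.2 m)) => // c []. Qed.

Variables (B : gring G) (mb : M -> B -> M).

Local Notation Bact_hom := (fun (c : B * (M -> N)) m => c.2 (mb m c.1)).

Lemma in_BHOM_act b f : in_HOM am an dM dN f -> in_BHOM am an dM dN mb (fun m => f (mb m b)).
Proof. by move=> fH; exact: (@fun_span_gen _ _ _ _ Bact_hom (b, f)). Qed.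

Lemma in_BHOM_sum (I : Type) (r : seq I) (F : I -> M -> N) f :
  (forall m, f m = \sum_(i <- r) F i m) ->
  (forall i, List.In i r -> in_BHOM am an dM dN mb (F i)) -> in_BHOM am an dM dN mb f.
Proof. exact: (@fun_span_sum _ _ _ _ Bact_hom). Qed.

Hypotheses (mbD : forall b, {morph mb^~ b : m m' / m + m'})
           (mb_am : forall a m b, mb (am a m) b = am a (mb m b)).

Lemma in_BHOM_Alinear f : in_BHOM am an dM dN mb f -> Alinear am an f.
Proof.
apply: (@fun_span_Alinear _ _ _ _ Bact_hom) => // c /in_HOM_Alinear [cD cL].
by split=> [m m' | a m] /=; rewrite ?mbD ?mb_am.
Qed.
End Hom.

Section HomAction.
Variables (G : ggroup) (A : gring G) (M : zmodType) (am : A -> M -> M) (dM : G -> M -> Prop).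
Variable U : glmod A.

Lemma in_HOM_lact f u :
  in_HOM am (@rmul _ A) dM (@rdeg _ A) f ->
  in_HOM am (@lact _ _ U) dM (@ldeg _ _ U) (fun m => lact (f m) u).
Proof.
move=> [l [lhom fE]]; have [_ _ decU _] := ldeg_grading U; have [lu [luh uE]] := decU u.
apply: (in_HOM_sum (F := fun c m => \sum_(e <- lu) lact (c.2 m) e.2)) => [m | c cl].
  rewrite fE (additive_sum _ _ (fun x y => lactDl x y u)); apply: eq_bigr_In => c _.
  by rewrite uE (additive_sum _ _ (lactDr _)).
have [[cD cL] c_deg] := lhom c cl.
apply: (in_HOM_sum (F := fun e m => lact (c.2 m) e.2)) => // e el.
apply: (in_HOM_graded (s := gmul c.1 e.1)) => [|t m mt].
  by split=> [m m' | a m]; rewrite ?cD ?lactDl ?cL ?lactA.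
by rewrite gmulA; apply: ldeg_act; [exact: c_deg | exact: luh].
Qed.

Variables (B : gring G) (mb : M -> B -> M).

Lemma in_BHOM_lact x u :
  in_BHOM am (@rmul _ A) dM (@rdeg _ A) mb x ->
  in_BHOM am (@lact _ _ U) dM (@ldeg _ _ U) mb (fun m => lact (x m) u).
Proof.
move=> [l [lhom xE]].
apply: (in_BHOM_sum (F := fun c m => lact (c.2 (mb m c.1)) u)) => [m | c cl].
  by rewrite xE (additive_sum _ _ (fun x y => lactDl x y u)).
exact: (in_BHOM_act mb c.1 (in_HOM_lact u (lhom c cl))).
Qed.
End HomAction.

Section Eta.
Variables (G : ggroup) (A B : gring G) (P : gbimod A B) (U : glmod A).

Lemma inX_Alinear x : inX P x -> Alinear (@bl _ _ _ P) (@rmul _ A) x.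
Proof.
apply: in_BHOM_Alinear; [exact: rmulDr | by move=> b m m'; exact: brDl | exact: blr].
Qed.

Lemma eta_tensor_zero s p : tensor_zero P U s -> eta P U s p = 0.
Proof.
move/(_ U (fun x u => lact (x p) u)); apply.
split=> [x x' u _ _ | x u u' _ | x a u _]; [exact: lactDl | exact: lactDr | exact: lactA].
Qed.

Lemma eta_in_BHOM s : in_T P s -> inBHOM_PU P U (eta P U s).
Proof.
move=> sX; apply: (in_BHOM_sum (F := fun c p => lact (c.1 p) c.2)) => // c cs.
exact/in_BHOM_lact/sX.
Qed.

Lemma eta_Tact b s p : eta P U (Tact P b s) p = eta P U s (br p b).
Proof. by rewrite /eta /Tact big_map. Qed.

Lemma eta_graded g s :
  T_homog P U g s -> graded_of (@bdeg _ _ _ P) (@ldeg _ _ U) g (eta P U s).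
Proof.
move=> s_homog t p pt; apply: grading_sum; first exact: ldeg_grading.
move=> c cs; have [r [t' [c1r [c2t' <-]]]] := s_homog c cs.
by rewrite gmulA; apply: ldeg_act; [exact: c1r | exact: c2t'].
Qed.

Lemma eta_cat s1 s2 p : eta P U (s1 ++ s2) p = eta P U s1 p + eta P U s2 p.
Proof. by rewrite /eta big_cat. Qed.

Lemma in_T_cat (s1 s2 : seq ((P -> A) * U)) : in_T P s1 -> in_T P s2 -> in_T P (s1 ++ s2).
Proof. by move=> s1X s2X c /(List.in_app_or s1 s2 c) []; [exact: s1X | exact: s2X]. Qed.

Lemma Xbalanced_suml (W : zmodType) (phi : (P -> A) -> U -> W) (I : Type) (r : seq I)
    (F : I -> P -> A) u :
  Xbalanced phi -> (forall i, List.In i r -> inX P (F i)) ->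
  phi (fun p => \sum_(i <- r) F i p) u = \sum_(i <- r) phi (F i) u.
Proof.
move=> [phiD _ _]; elim: r => [|i r IHr] FX.
  set z := fun p => _; have zX : inX P z by apply: (in_BHOM_sum (r := [::])).
  have zz : (fun p => z p + z p) = z.
    by apply: functional_extensionality => p; rewrite /z big_nil addr0.
  by apply: (addrI (phi z u)); rewrite -phiD // zz big_nil addr0.
have rX : inX P (fun p => \sum_(j <- r) F j p).
  by apply: (in_BHOM_sum (F := F)) => // j rj; apply: FX; right.
have -> : (fun p => \sum_(j <- i :: r) F j p) = (fun p => F i p + \sum_(j <- r) F j p).
  by apply: functional_extensionality => p; rewrite big_cons.
by rewrite phiD ?IHr ?big_cons // => [j rj|]; apply: FX; [right | left].
Qed.
End Eta.

Section Morita.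
Variables (G : ggroup) (A B : gring G) (P : gbimod A B) (Q : gbimod B A).
Variables (mu : P -> Q -> A) (nu : Q -> P -> B).
Hypotheses (Q_lunital : lunital (@bl _ _ _ Q))
  (muDl : forall p p' q, mu (p + p') q = mu p q + mu p' q)
  (muDr : forall p q q', mu p (q + q') = mu p q + mu p q')
  (muB : forall p b q, mu (br p b) q = mu p (bl b q))
  (muAl : forall a p q, mu (bl a p) q = rmul a (mu p q))
  (muAr : forall p q a, mu p (br q a) = rmul (mu p q) a)
  (mu_deg : forall s t p q, bdeg s p -> bdeg t q -> rdeg (gmul s t) (mu p q))
  (mu_nu : forall p' q p, br p' (nu q p) = bl (mu p' q) p)
  (nu_surj : trace_surj nu).

Lemma mu_in_HOM q : in_HOM (@bl _ _ _ P) (@rmul _ A) (@bdeg _ _ _ P) (@rdeg _ A) (mu^~ q).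
Proof.
have [_ _ decQ _] := bdeg_grading Q; have [l [lh qE]] := decQ q.
apply: (in_HOM_sum (F := fun c p => mu p c.2)) => [p | c cl].
  by rewrite qE (additive_sum _ _ (muDr p)).
apply: (in_HOM_graded (s := c.1)) => [|t p pt]; last exact: mu_deg (lh c cl).
by split=> [p p' | a p]; [exact: muDl | exact: muAl].
Qed.

Lemma mu_inX q : inX P (mu^~ q).
Proof.
have [l qE] := Q_lunital q.
apply: (in_BHOM_sum (F := fun c p => mu (br p c.1) c.2)) => [p | c _].
  by rewrite qE (additive_sum _ _ (muDr p)); apply: eq_bigr_In => c _; rewrite muB.
exact: (in_BHOM_act _ c.1 (mu_in_HOM c.2)).
Qed.

Lemma mu_rmul_inX q a : inX P (fun p => rmul (mu p q) a).
Proof.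
by rewrite -(functional_extensionality _ _ (fun p => muAr p q a)); exact: mu_inX.
Qed.

Lemma Alinear_br_trace (N : zmodType) (an : A -> N -> N) (f : P -> N) p b l :
  Alinear (@bl _ _ _ P) an f -> b = \sum_(d <- l) nu d.1 d.2 ->
  f (br p b) = \sum_(d <- l) an (mu p d.1) (f d.2).
Proof.
move=> [fD fL] ->; rewrite (additive_sum _ _ (brDr p)) (additive_sum _ _ fD).
by apply: eq_bigr_In => d _; rewrite mu_nu fL.
Qed.

Variable U : glmod A.

Lemma eta_surj_act f b :
  in_HOM (@bl _ _ _ P) (@lact _ _ U) (@bdeg _ _ _ P) (@ldeg _ _ U) f ->
  exists s, in_T P s /\ forall p, eta P U s p = f (br p b).
Proof.
move=> /(in_HOM_Alinear (@lactDr _ _ U)) fA; have [l bE] := nu_surj b.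
exists (map (fun d => (mu^~ d.1, f d.2)) l); split=> [c /List.in_map_iff [d [<- _]] | p].
  exact: mu_inX.
by rewrite /eta big_map (Alinear_br_trace _ fA bE).
Qed.

Lemma eta_surj h : inBHOM_PU P U h -> exists s, in_T P s /\ forall p, eta P U s p = h p.
Proof.
move=> [l [lhom hE]].
suff [s [sX sE]] : exists s, in_T P s /\ forall p, eta P U s p = \sum_(c <- l) c.2 (br p c.1).
  by exists s; split=> // p; rewrite sE hE.
elim: l lhom {hE} => [|c l IHl] lhom.
  by exists [::]; split=> // p; rewrite /eta !big_nil.
have [s1 [s1X s1E]] := eta_surj_act c.1 (lhom c (or_introl erefl)).
have [s2 [s2X s2E]] := IHl (fun d dl => lhom d (or_intror dl)).
by exists (s1 ++ s2); split=> [|p]; rewrite ?eta_cat ?s1E ?s2E ?big_cons //; exact: in_T_cat.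
Qed.

Lemma eta_ker_torsion s :
  in_T P s -> (forall p, eta P U s p = 0) -> forall b, tensor_zero P U (Tact P b s).
Proof.
move=> sX s0 b W phi phiB; have [l bE] := nu_surj b; have [_ phiDr phiA] := phiB.
rewrite /Tact big_map /=.
transitivity (\sum_(c <- s) \sum_(d <- l) phi (mu^~ d.1) (lact (c.1 d.2) c.2)).
  apply: eq_bigr_In => c cs.
  rewrite (functional_extensionality _ _
             (fun p => Alinear_br_trace p (inX_Alinear (sX c cs)) bE)).
  rewrite Xbalanced_suml // => [|d _]; last exact: mu_rmul_inX.
  by apply: eq_bigr_In => d _; rewrite phiA //; exact: mu_inX.
rewrite exchange_big big1 // => d _.
have phi_d_additive : {morph phi (mu^~ d.1) : u u' / u + u'}.
  by move=> u u'; apply: phiDr; exact: mu_inX.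
rewrite -(additive_sum (f := phi (mu^~ d.1)) _ _ phi_d_additive).
have := s0 d.2; rewrite /eta => ->.
by apply: (addrI (phi (mu^~ d.1) 0)); rewrite -phi_d_additive !addr0.
Qed.
End Morita.

Theorem lemma5p4 (G : ggroup) (A B : gring G) (P : gbimod A B) (Q : gbimod B A)
    (mu : P -> Q -> A) (nu : Q -> P -> B) (U : glmod A) :
  morita_context mu nu -> trace_surj mu -> trace_surj nu ->
  lunital (@lact _ _ U) ->
  (* eta is well defined on the tensor product *)
  (forall s, in_T P s -> tensor_zero P U s -> forall p, eta P U s p = 0) /\
  [/\
      (* eta takes values in B . HOM_A(P,U) *)
      (forall s, in_T P s -> inBHOM_PU P U (eta P U s)),
      (* eta is left B-linear *)
      (forall b s, in_T P s -> forall p, eta P U (Tact P b s) p = eta P U s (br p b)),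
      (* eta is graded of degree e *)
      (forall g s, in_T P s -> T_homog P U g s ->
         graded_of (@bdeg _ _ _ P) (@ldeg _ _ U) g (eta P U s)),
      (* eta is surjective onto B . HOM_A(P,U) *)
      (forall h, inBHOM_PU P U h -> exists s, in_T P s /\ forall p, eta P U s p = h p) &
      (* the kernel of eta is torsion: B z = 0 for z \in ker eta *)
      (forall s, in_T P s -> (forall p, eta P U s p = 0) ->
         forall b, tensor_zero P U (Tact P b s))].
Proof.
move=> [[_ _ _ [Q_lunital _]] [[muDl muDr muB muAl muAr] [mu_deg [_ [_ [mu_nu _]]]]]].
move=> _ nu_surj _.
split=> [s _ s0 p|]; first exact: eta_tensor_zero.
split=> [s | b s _ p | g s _ | |]; first exact: eta_in_BHOM.
- exact: eta_Tact.
- exact: eta_graded.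
- exact: (eta_surj Q_lunital muDl muDr muB muAl mu_deg mu_nu nu_surj).
- exact: (eta_ker_torsion Q_lunital muDl muDr muB muAl muAr mu_deg mu_nu nu_surj).
Qed.
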